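(* Let $q$ be a prime power and let $n,k$ be integers with $5\le k$ and $k\le n-2\le q-2$. Let $\alpha_1,\dots,\alpha_n\in\mathbb{F}_q$ be pairwise distinct, let $G_{k-1,k-2}$ be the $k\times n$ matrix whose rows are $(\alpha_1^{e},\dots,\alpha_n^{e})$ for $e=0,1,\dots,k-3,k,k+1$, let $\mathbf{v}=(v_1,\dots,v_n)\in(\mathbb{F}_q^* )^n$, and let $C_{\mathbf v}$ be the linear code generated by $G_{k-1,k-2}\cdot\mathrm{diag}(v_1,\dots,v_n)$. Let $u_i=\prod_{j\ne i}(\alpha_i-\alpha_j)^{-1}$ for $1\le i\le n$ and $S_t=S_t(\alpha_1,\dots,\alpha_n)$. Then $C_{\mathbf v}$ is self-orthogonal if and only if there exists a polynomial $f(x)=f_0+f_1x+\dots+f_{n-2k}x^{n-2k}\in\mathbb{F}_q[x]$ such that (1) $v_i^2=u_if(\alpha_i)$ for all $1\le i\le n$; (2) $f_{n-2k-1}+f_{n-2k}S_1=0$; (3) $f_{n-2k-2}+f_{n-2k-1}S_1+f_{n-2k}S_2=0$; (4) $f_{n-2k-3}+f_{n-2k-2}S_1+f_{n-2k-1}S_2+f_{n-2k}S_3=0$, where $f_j=0$ for $j<0$.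
   Context: Convention: $0^0=1$. $S_t(x_1,\dots,x_m)=\sum_{t_1+\dots+t_m=t,\ t_i\ge0}x_1^{t_1}\cdots x_m^{t_m}$ is the complete homogeneous symmetric polynomial of degree $t$ ($S_0=1$). A linear code $C$ is self-orthogonal if $C\subseteq C^\perp$, where $C^\perp$ is the dual with respect to the Euclidean inner product $\langle x,y\rangle=\sum_i x_iy_i$. *)

From HB Require Import structures.
From mathcomp Require Import all_boot all_order all_algebra all_field.
Set Implicit Arguments. Unset Strict Implicit. Unset Printing Implicit Defensive.
Import Order.TTheory GRing.Theory Num.Theory.
Local Open Scope ring_scope.

Definition inner (F : fieldType) (n : nat) (x y : 'rV[F]_n) : F :=
  \sum_(i < n) x 0 i * y 0 i.

Definition self_orthogonal (F : fieldType) (m n : nat) (M : 'M[F]_(m, n)) : Prop :=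
  forall x y : 'rV[F]_n, (x <= M)%MS -> (y <= M)%MS -> inner x y = 0.

(* Exponent of row r of G_{k-1,k-2}: 0,1,...,k-3, then k, k+1. *)
Definition gexp (k : nat) (r : nat) : nat := if (r < k - 2)%N then r else (r + 2)%N.

Definition Gmat (F : fieldType) (k n : nat) (alpha : 'I_n -> F) : 'M[F]_(k, n) :=
  \matrix_(r < k, j < n) alpha j ^+ gexp k r.

Definition ucoef (F : fieldType) (n : nat) (alpha : 'I_n -> F) (i : 'I_n) : F :=
  \prod_(j < n | j != i) (alpha i - alpha j)^-1.

(* Complete homogeneous symmetric polynomial S_t evaluated at alpha. *)
Definition hsym (F : fieldType) (n : nat) (alpha : 'I_n -> F) (t : nat) : F :=
  \sum_(e : {ffun 'I_n -> 'I_t.+1} | (\sum_(i < n) (e i : nat) == t)%N)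
     \prod_(i < n) alpha i ^+ e i.

Definition coefz (F : fieldType) (f : {poly F}) (j : int) : F :=
  match j with Posz m => f`_m | Negz _ => 0 end.

(* Write w_i = v_i^2.  Self-orthogonality means sum_i w_i alpha_i^e = 0 for every
   e = e_r + e_s with e_r, e_s in {0, ..., k-3, k, k+1}; for k >= 5 these are exactly
   the e <= 2k+2 with e <> 2k-1.  Lagrange interpolation writes w_i = u_i f(alpha_i)
   with deg f < n, and then sum_i w_i alpha_i^e = sum_i u_i g(alpha_i) for g = X^e f.
   The weighted power sums sum_i u_i alpha_i^p vanish for p < n-1 and equal S_t for
   p = n-1+t: both sequences obey the recurrence given by the coefficients of
   prod_i (1 - alpha_i X), whose inverse power series is sum_t S_t X^t.  Hence
   sum_i u_i g(alpha_i) = sum_t g_(n-1+t) S_t, so the vanishing for e <= 2k-2 forces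
   deg f <= n-2k, and the exponents 2k, 2k+1, 2k+2 give conditions (2)-(4). *)

From HB Require Import structures.
From mathcomp Require Import all_boot all_order all_algebra all_field.
From mathcomp Require Import zify ring.
Set Implicit Arguments. Unset Strict Implicit. Unset Printing Implicit Defensive.
Import Order.TTheory GRing.Theory Num.Theory.
Local Open Scope ring_scope.

Lemma self_orthogonalE (F : fieldType) m n (M : 'M[F]_(m, n)) :
  self_orthogonal M <-> M *m M^T = 0.
Proof.
have innerE (x y : 'rV[F]_n) : inner x y = (x *m y^T) 0 0.
  by rewrite mxE; apply: eq_bigr => i _; rewrite mxE.
split=> [soM | MMt0 _ _ /submxP[D ->] /submxP[E ->]].
  apply/matrixP => r s; rewrite [RHS]mxE -(soM _ _ (row_sub r M) (row_sub s M)).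
  by rewrite innerE !mxE; apply: eq_bigr => j _; rewrite !mxE.
by rewrite innerE trmx_mul mulmxA -(mulmxA D) MMt0 mulmx0 mul0mx mxE.
Qed.

Lemma sum_ord_trunc (V : nmodType) (G : nat -> V) m N : (m <= N)%N ->
  (forall j, (m <= j < N)%N -> G j = 0) -> \sum_(j < N) G j = \sum_(j < m) G j.
Proof.
move=> le_mN G0; rewrite -!(big_mkord xpredT) (big_cat_nat (leq0n m) le_mN) /=.
by rewrite [X in _ + X]big1_seq ?addr0 // => j /andP[_]; rewrite mem_index_iota => /G0.
Qed.

Lemma conv_unique (F : nzRingType) (r a b : nat -> F) t :
  r 0%N = 1 -> a 0%N = b 0%N ->
  (forall s, (0 < s <= t)%N ->
     \sum_(j < s.+1) r j * a (s - j)%N = \sum_(j < s.+1) r j * b (s - j)%N) ->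
  forall s, (s <= t)%N -> a s = b s.
Proof.
move=> r0 ab0 conv_ab; elim/ltn_ind => [[// | s] IH le_st].
have := conv_ab s.+1 le_st; rewrite !(big_ord_recl s.+1) r0 !mul1r !subn0.
suff -> : \sum_(j < s.+1) r (bump 0 j) * a (s.+1 - bump 0 j)%N
        = \sum_(j < s.+1) r (bump 0 j) * b (s.+1 - bump 0 j)%N by move/addIr.
by apply: eq_bigr => j _; rewrite IH //; rewrite /bump /=; lia.
Qed.

Lemma size_index_enum_ord n : size (index_enum 'I_n) = n.
Proof. by rewrite -[in RHS](card_ord n) cardT enumT. Qed.

Section ReversedProduct.
Variables (R : comNzRingType) (I : Type) (b : I -> R).

Lemma size_prod_1subCX (r : seq I) :
  (size (\prod_(i <- r) (1 - (b i)%:P * 'X))%R <= (size r).+1)%N.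
Proof.
elim: r => [|a r IH]; first by rewrite big_nil size_poly1.
rewrite big_cons (leq_trans (size_polyMleq _ _)) //.
have : (size (1 - (b a)%:P * 'X)%R <= 2)%N.
  rewrite (leq_trans (size_polyD _ _)) // size_polyN size_poly1 geq_max /=.
  by rewrite (leq_trans (size_polyMleq _ _)) // size_polyX addn2 ltnS size_polyC_leq1.
by move: IH => /=; lia.
Qed.

Lemma prod_1subCX_rev (r : seq I) (x : R) :
  \sum_(j < (size r).+1) (\prod_(i <- r) (1 - (b i)%:P * 'X))`_j * x ^+ (size r - j)
  = \prod_(i <- r) (x - b i).
Proof.
elim: r => [|a r IH].
  by rewrite !big_nil big_ord_recl big_ord0 coef1 /= expr0 mulr1 addr0.
have size_P := size_prod_1subCX r; rewrite big_cons [RHS]big_cons -IH /=.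
set P := \prod_(i <- r) _; set m := size r.
have coef_1subCX_P j : ((1 - (b a)%:P * 'X) * P)`_j
    = P`_j - b a * (if j == 0%N then 0 else P`_j.-1).
  by rewrite mulrBl mul1r coefB -mulrA coefCM coefXM.
under eq_bigr do rewrite coef_1subCX_P mulrBl.
rewrite sumrB big_ord_recr /= [P`_m.+1]nth_default // mul0r addr0.
rewrite [X in _ - X]big_ord_recl /= mulr0 mul0r add0r mulrBl !big_distrr /=.
congr (_ - _); apply: eq_bigr => j _.
  by rewrite subSn ?exprS 1?mulrCA //; have := ltn_ord j; lia.
by rewrite /bump /= add1n subSS mulrA.
Qed.

End ReversedProduct.

Lemma coef_prod_1subXn (R : comNzRingType) (I : Type) (r : seq I) (c : I -> R) m p :
  ~~ (m %| p)%N -> (\prod_(i <- r) (1 - ((c i)%:P * 'X) ^+ m))`_p = 0.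
Proof.
elim: r p => [|i r IH] p m_ndvd_p.
  by rewrite big_nil coef1; case: eqP m_ndvd_p => // ->; rewrite dvdn0.
rewrite big_cons mulrBl mul1r coefB IH // exprMn -rmorphXn -mulrA coefCM coefXnM.
case: ltnP => [|le_mp]; first by rewrite mulr0 subr0.
rewrite IH ?mulr0 ?subr0 //; apply: contra m_ndvd_p => m_dvd.
by rewrite -(subnK le_mp) dvdn_add.
Qed.

Section WeightedPowerSums.
Variables (F : fieldType) (n : nat) (alpha : 'I_n -> F).
Hypothesis alpha_inj : injective alpha.

Definition node_poly (i : 'I_n) : {poly F} :=
  \prod_(j < n | j != i) ('X - (alpha j)%:P).

Lemma horner_node_poly i j :
  (node_poly i).[alpha j] = if j == i then (ucoef alpha i)^-1 else 0.
Proof.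
rewrite horner_prod; have [->|ji] := eqVneq j i.
  by rewrite /ucoef prodfV invrK; apply: eq_bigr => l _; rewrite hornerXsubC.
by rewrite (bigD1 j) //= hornerXsubC subrr mul0r.
Qed.

Lemma ucoef_neq0 i : ucoef alpha i != 0.
Proof.
rewrite /ucoef prodfV invr_eq0; apply/prodf_neq0 => j ji.
by rewrite subr_eq0 (inj_eq alpha_inj) eq_sym.
Qed.

Lemma monic_node_poly i : node_poly i \is monic.
Proof. exact: monic_prod_XsubC. Qed.

Lemma size_node_poly i : size (node_poly i) = n.
Proof.
rewrite size_prod => [|j _]; last by rewrite polyXsubC_eq0.
rewrite (eq_bigr (fun=> 2%N)) => [|j _]; last by rewrite size_XsubC.
rewrite sum_nat_const cardC1 card_ord; have := ltn_ord i; lia.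
Qed.

Lemma horner_sum_node_poly (c : 'I_n -> F) j :
  (\sum_i c i *: node_poly i).[alpha j] = c j / ucoef alpha j.
Proof.
rewrite horner_sum (bigD1 j) //= big1 ?addr0 => [|i ij].
  by rewrite hornerZ horner_node_poly eqxx.
by rewrite hornerZ horner_node_poly eq_sym (negPf ij) mulr0.
Qed.

Lemma size_sum_node_poly (c : 'I_n -> F) :
  (size (\sum_i c i *: node_poly i)%R <= n)%N.
Proof.
apply: (big_ind (fun p : {poly F} => size p <= n)%N) => [|p q|i _].
- by rewrite size_poly0.
- by move=> size_p size_q; rewrite (leq_trans (size_polyD p q)) // geq_max size_p.
- by rewrite (leq_trans (size_scale_leq _ _)) // size_node_poly.
Qed.

Lemma interpolation_exists (w : 'I_n -> F) :
  exists2 f : {poly F}, (size f <= n)%N & forall i, w i = ucoef alpha i * f.[alpha i].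
Proof.
exists (\sum_i w i *: node_poly i) => [|i]; first exact: size_sum_node_poly.
by rewrite horner_sum_node_poly mulrC divfK // ucoef_neq0.
Qed.

Lemma lagrange_expansion (g : {poly F}) : (size g <= n)%N ->
  g = \sum_i (ucoef alpha i * g.[alpha i]) *: node_poly i.
Proof.
move=> size_g; apply/eqP; rewrite -subr_eq0; apply/eqP.
apply: (@roots_geq_poly_eq0 _ _ (map alpha (enum 'I_n))).
- apply/allP => _ /mapP[j _ ->].
  by rewrite rootE !hornerE horner_sum_node_poly mulrC mulKf ?subrr ?ucoef_neq0.
- by rewrite map_inj_uniq ?enum_uniq.
- rewrite size_map size_enum_ord (leq_trans (size_polyD _ _)) // size_polyN.
  by rewrite geq_max size_g size_sum_node_poly.
Qed.

Lemma sum_ucoef_horner (g : {poly F}) : (size g <= n)%N ->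
  \sum_i ucoef alpha i * g.[alpha i] = g`_n.-1.
Proof.
move=> size_g; rewrite [in RHS](lagrange_expansion size_g) coef_sum.
apply: eq_bigr => i _; rewrite coefZ -[in (node_poly i)`_ _](size_node_poly i) -lead_coefE.
by rewrite (monicP (monic_node_poly i)) mulr1.
Qed.

Definition upsum (p : nat) : F := \sum_i ucoef alpha i * alpha i ^+ p.

Lemma upsum_lt p : (p < n.-1)%N -> upsum p = 0.
Proof.
move=> lt_p_n; rewrite /upsum.
have := @sum_ucoef_horner 'X^p; rewrite size_polyXn coefXn.
under eq_bigr do rewrite hornerXn.
by move=> ->; [rewrite gtn_eqF | lia].
Qed.

Lemma upsum_pred : (0 < n)%N -> upsum n.-1 = 1.
Proof.
move=> n_gt0; rewrite /upsum.
have := @sum_ucoef_horner 'X^(n.-1); rewrite size_polyXn coefXn eqxx.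
under eq_bigr do rewrite hornerXn.
by move=> ->; last by rewrite prednK.
Qed.

Definition rev_node : {poly F} := \prod_(j < n) (1 - (alpha j)%:P * 'X).

Definition hsym_gen (t : nat) : {poly F} :=
  \prod_(i < n) \sum_(j < t.+1) ((alpha i)%:P * 'X) ^+ j.

Lemma size_rev_node : (size rev_node <= n.+1)%N.
Proof. by have := size_prod_1subCX alpha (index_enum 'I_n); rewrite size_index_enum_ord. Qed.

Lemma rev_node_coef0 : rev_node`_0 = 1.
Proof.
by rewrite -horner_coef0 horner_prod big1 // => i _; rewrite !hornerE subr0.
Qed.

Lemma rev_node_rev x :
  \sum_(j < n.+1) rev_node`_j * x ^+ (n - j) = \prod_(j < n) (x - alpha j).
Proof. by have := prod_1subCX_rev alpha (index_enum 'I_n) x; rewrite size_index_enum_ord. Qed.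

Lemma upsum_rec p : \sum_(j < n.+1) rev_node`_j * upsum (p + (n - j)) = 0.
Proof.
transitivity (\sum_i ucoef alpha i * alpha i ^+ p * \prod_(j < n) (alpha i - alpha j)).
  under [RHS]eq_bigr do rewrite -rev_node_rev big_distrr.
  rewrite exchange_big; apply: eq_bigr => j _ /=.
  by rewrite /upsum big_distrr; apply: eq_bigr => i _; rewrite exprD /=; ring.
by apply: big1 => i _; rewrite (bigD1 i) //= subrr mul0r mulr0.
Qed.

Lemma upsum_conv s : (0 < n)%N -> (0 < s)%N ->
  \sum_(j < s.+1) rev_node`_j * upsum (n.-1 + (s - j)) = 0.
Proof.
move=> n_gt0 s_gt0; pose G j := rev_node`_j * upsum (n.-1 + s - j).
have G_high j : (n < j)%N -> G j = 0.
  by move=> lt_n_j; rewrite /G nth_default ?mul0r // (leq_trans size_rev_node).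
have G_beyond j : (s < j)%N -> G j = 0.
  move=> lt_s_j; have [le_j_n | /G_high //] := leqP j n.
  by rewrite /G upsum_lt ?mulr0 //; lia.
transitivity (\sum_(j < s + n) G j).
  rewrite (@sum_ord_trunc _ G s.+1); [|lia|by move=> j /andP[/G_beyond]].
  by apply: eq_bigr => j _; rewrite /G addnBA //; have := ltn_ord j; lia.
rewrite (@sum_ord_trunc _ G n.+1); [|lia|by move=> j /andP[/G_high]].
rewrite -[RHS](upsum_rec s.-1); apply: eq_bigr => j _.
by rewrite /G; congr (_ * upsum _); have := ltn_ord j; lia.
Qed.

Lemma rev_node_hsym_gen t :
  rev_node * hsym_gen t = \prod_(i < n) (1 - ((alpha i)%:P * 'X) ^+ t.+1).
Proof.
rewrite -big_split /=; apply: eq_bigr => i _.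
rewrite -[in RHS](expr1n _ t.+1) subrXX; congr (_ * _).
by apply: eq_bigr => j _; rewrite expr1n mul1r.
Qed.

Lemma hsym_gen_coef0 t : (hsym_gen t)`_0 = 1.
Proof.
rewrite -horner_coef0 horner_prod big1 // => i _.
rewrite horner_sum big_ord_recl big1 ?addr0 => [|j _]; first by rewrite expr0 hornerC.
by rewrite !hornerE expr0n.
Qed.

Lemma hsym_gen_coef t : (hsym_gen t)`_t = hsym alpha t.
Proof.
rewrite /hsym_gen bigA_distr_bigA /= coef_sum /hsym [RHS]big_mkcond /=.
apply: eq_bigr => e _; under eq_bigr do rewrite exprMn -rmorphXn.
rewrite big_split /= -rmorph_prod prodrXr coefCM coefXn eq_sym.
by case: (_ == _); rewrite ?mulr1 ?mulr0.
Qed.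

Lemma hsym0 : hsym alpha 0 = 1.
Proof. by rewrite -hsym_gen_coef hsym_gen_coef0. Qed.

Lemma upsum_hsym t : (0 < n)%N -> upsum (n.-1 + t) = hsym alpha t.
Proof.
move=> n_gt0; rewrite -hsym_gen_coef.
apply: (@conv_unique _ (fun j => rev_node`_j) (fun l => upsum (n.-1 + l))
                     (fun l => (hsym_gen t)`_l) t) => // [||s /andP[s_gt0 le_st]].
- exact: rev_node_coef0.
- by rewrite hsym_gen_coef0 addn0 upsum_pred.
rewrite upsum_conv // -coefM rev_node_hsym_gen coef_prod_1subXn //.
by apply/negP => /dvdn_leq; lia.
Qed.

Lemma sum_ucoef_horner_hsym m (g : {poly F}) : (0 < n)%N -> (size g <= n.-1 + m)%N ->
  \sum_i ucoef alpha i * g.[alpha i] = \sum_(t < m) g`_(n.-1 + t) * hsym alpha t.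
Proof.
move=> n_gt0 size_g.
have sum_coef p : \sum_i ucoef alpha i * (g`_p * alpha i ^+ p) = g`_p * upsum p.
  by rewrite /upsum big_distrr; apply: eq_bigr => i _; rewrite mulrCA.
under eq_bigr do rewrite (horner_coef_wide _ size_g) big_distrr.
rewrite exchange_big big_split_ord /= big1 ?add0r => [|p _]; last first.
  by rewrite sum_coef upsum_lt ?mulr0.
by apply: eq_bigr => t _; rewrite sum_coef upsum_hsym.
Qed.

Definition umoment (f : {poly F}) (e : nat) : F :=
  \sum_i ucoef alpha i * f.[alpha i] * alpha i ^+ e.

Lemma umomentE f e : umoment f e = \sum_i ucoef alpha i * (f * 'X^e).[alpha i].
Proof. by apply: eq_bigr => i _; rewrite hornerM hornerXn mulrA. Qed.

Lemma size_le_vanishing_moments (f : {poly F}) m : (size f <= n)%N ->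
  (forall e, (e < m)%N -> umoment f e = 0) -> (size f <= n - m)%N.
Proof.
move=> size_f; elim: m => [|m IH] moments0; first by rewrite subn0.
have size_fm : (size f <= n - m)%N by apply: IH => e /leqW/moments0.
have [le_nm | lt_mn] := leqP n m; first by move: size_fm; lia.
apply/leq_sizeP => j le_j; have [/(leq_sizeP _ _ size_fm)// | lt_j] := leqP (n - m) j.
have size_fXm : (size (f * 'X^m)%R <= n)%N.
  by rewrite (leq_trans (size_polyMleq _ _)) // size_polyXn; lia.
have := moments0 m (ltnSn m).
by rewrite umomentE (sum_ucoef_horner size_fXm) coefMXn ifN; [congr (f`_ _ = _); lia | lia].
Qed.

End WeightedPowerSums.

Lemma coefMXn_coefz (F : fieldType) (f : {poly F}) e p :
  (f * 'X^e)`_p = coefz f (p%:Z - e%:Z).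
Proof.
rewrite coefMXn; case: ltnP => [lt_pe | le_ep].
  by have -> : p%:Z - e%:Z = Negz (e - p).-1 by rewrite NegzE; lia.
by have -> : p%:Z - e%:Z = Posz (p - e) by lia.
Qed.

Section TopMoments.
Variables (F : fieldType) (n k : nat) (alpha : 'I_n -> F) (f : {poly F}).
Hypotheses (alpha_inj : injective alpha) (n_gt0 : (0 < n)%N) (k_gt0 : (0 < k)%N).
Hypothesis size_f : (size f)%:Z <= n%:Z - 2 * k%:Z + 1.

Lemma coefz_top j : n%:Z - 2 * k%:Z < j -> coefz f j = 0.
Proof.
case: j => // m lt_j; have /leq_sizeP f_high : (size f <= m)%N by lia.
exact: f_high.
Qed.

Lemma umoment_hsym e : (e <= 2 * k + 2)%N ->
  umoment alpha f e =
    coefz f (n%:Z - 1 - e%:Z) + coefz f (n%:Z - e%:Z) * hsym alpha 1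
    + coefz f (n%:Z + 1 - e%:Z) * hsym alpha 2 + coefz f (n%:Z + 2 - e%:Z) * hsym alpha 3.
Proof.
move=> le_e; have size_fXe : (size (f * 'X^e)%R <= n.-1 + 4)%N.
  by rewrite (leq_trans (size_polyMleq _ _)) // size_polyXn; lia.
rewrite umomentE (sum_ucoef_horner_hsym alpha_inj n_gt0 size_fXe).
rewrite !big_ord_recl big_ord0 addr0 /= hsym0 mulr1 !coefMXn_coefz !addrA.
by congr (coefz f _ + coefz f _ * _ + coefz f _ * _ + coefz f _ * _); rewrite /bump /=; lia.
Qed.

Lemma umoment_low e : (e <= 2 * k - 2)%N -> umoment alpha f e = 0.
Proof.
move=> le_e; rewrite umoment_hsym; last lia.
by rewrite !coefz_top ?mul0r ?addr0 //; lia.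
Qed.

Lemma umoments_vanishP :
  (forall e, (e <= 2 * k + 2)%N -> e != (2 * k - 1)%N -> umoment alpha f e = 0) <->
  coefz f (n%:Z - 2 * k%:Z - 1) + coefz f (n%:Z - 2 * k%:Z) * hsym alpha 1 = 0 /\
  coefz f (n%:Z - 2 * k%:Z - 2) + coefz f (n%:Z - 2 * k%:Z - 1) * hsym alpha 1
    + coefz f (n%:Z - 2 * k%:Z) * hsym alpha 2 = 0 /\
  coefz f (n%:Z - 2 * k%:Z - 3) + coefz f (n%:Z - 2 * k%:Z - 2) * hsym alpha 1
    + coefz f (n%:Z - 2 * k%:Z - 1) * hsym alpha 2
    + coefz f (n%:Z - 2 * k%:Z) * hsym alpha 3 = 0.
Proof.
have top0 : umoment alpha f (2 * k) =
    coefz f (n%:Z - 2 * k%:Z - 1) + coefz f (n%:Z - 2 * k%:Z) * hsym alpha 1.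
  rewrite umoment_hsym ?(coefz_top (j := n%:Z + 1 - _)) ?(coefz_top (j := n%:Z + 2 - _)); try lia.
  by rewrite !mul0r !addr0; congr (coefz f _ + coefz f _ * _); lia.
have top1 : umoment alpha f (2 * k + 1) =
    coefz f (n%:Z - 2 * k%:Z - 2) + coefz f (n%:Z - 2 * k%:Z - 1) * hsym alpha 1
    + coefz f (n%:Z - 2 * k%:Z) * hsym alpha 2.
  rewrite umoment_hsym ?(coefz_top (j := n%:Z + 2 - _)); try lia.
  by rewrite !mul0r !addr0; congr (coefz f _ + coefz f _ * _ + coefz f _ * _); lia.
have top2 : umoment alpha f (2 * k + 2) =
    coefz f (n%:Z - 2 * k%:Z - 3) + coefz f (n%:Z - 2 * k%:Z - 2) * hsym alpha 1
    + coefz f (n%:Z - 2 * k%:Z - 1) * hsym alpha 2 + coefz f (n%:Z - 2 * k%:Z) * hsym alpha 3.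
  rewrite umoment_hsym //.
  by congr (coefz f _ + coefz f _ * _ + coefz f _ * _ + coefz f _ * _); lia.
rewrite -top0 -top1 -top2; split=> [moments0 | [m0 [m1 m2]] e le_e ne_e].
  by split; [|split]; apply: moments0; lia.
have [/umoment_low // | lt_e] := leqP e (2 * k - 2).
by have [->|[->|->]] : (e = 2 * k \/ e = 2 * k + 1 \/ e = 2 * k + 2)%N by lia.
Qed.

End TopMoments.

Lemma gexp_addP k e : (5 <= k)%N ->
  (exists r s : 'I_k, gexp k r + gexp k s = e)%N <->
  (e <= 2 * k + 2)%N /\ e != (2 * k - 1)%N.
Proof.
move=> k_ge5; split=> [[r [s <-]] | [le_e ne_e]].
  by move: (ltn_ord r) (ltn_ord s); rewrite /gexp; repeat case: ifP => ?; lia.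
have gexp_pair a b : (a < k)%N -> (b < k)%N ->
    ((if a < k - 2 then a else a + 2) + (if b < k - 2 then b else b + 2) = e)%N ->
    exists r s : 'I_k, (gexp k r + gexp k s = e)%N.
  by move=> lt_ak lt_bk sum_e; exists (Ordinal lt_ak), (Ordinal lt_bk).
have [le_e_low | lt_e_low] := leqP e (2 * k - 6).
  by apply: (gexp_pair (minn e (k - 3)) (e - minn e (k - 3))%N); repeat case: ifP => ?; lia.
have [le_e_mid | lt_e_mid] := leqP e (2 * k - 3).
  by apply: (gexp_pair (k - 2)%N (e - k)%N); repeat case: ifP => ?; lia.
have [le_e_2 | lt_e_2] := leqP e (2 * k - 2).
  by apply: (gexp_pair (k - 1)%N (k - 3)%N); repeat case: ifP => ?; lia.
have [le_e_0 | lt_e_0] := leqP e (2 * k).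
  by apply: (gexp_pair (k - 2)%N (k - 2)%N); repeat case: ifP => ?; lia.
have [le_e_1 | lt_e_1] := leqP e (2 * k + 1).
  by apply: (gexp_pair (k - 2)%N (k - 1)%N); repeat case: ifP => ?; lia.
by apply: (gexp_pair (k - 1)%N (k - 1)%N); repeat case: ifP => ?; lia.
Qed.

Lemma Gmat_diag_gram (F : fieldType) k n (alpha v : 'I_n -> F) r s :
  (Gmat k alpha *m diag_mx (\row_j v j) *m (Gmat k alpha *m diag_mx (\row_j v j))^T) r s =
  \sum_i v i ^+ 2 * alpha i ^+ (gexp k r + gexp k s).
Proof.
rewrite mxE; apply: eq_bigr => i _.
by rewrite [_^T _ _]mxE !mul_mx_diag !mxE exprD; ring.
Qed.

Lemma self_orthogonal_GmatE (F : fieldType) n k (alpha v : 'I_n -> F) : (5 <= k)%N ->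
  self_orthogonal (Gmat k alpha *m diag_mx (\row_j v j)) <->
  forall e, (e <= 2 * k + 2)%N -> e != (2 * k - 1)%N ->
    \sum_i v i ^+ 2 * alpha i ^+ e = 0.
Proof.
move=> k_ge5; rewrite self_orthogonalE -matrixP.
split=> [gram0 e le_e ne_e | moments0 r s].
  have [r [s <-]] := (gexp_addP e k_ge5).2 (conj le_e ne_e).
  by rewrite -Gmat_diag_gram gram0 mxE.
have [le_e ne_e] : (gexp k r + gexp k s <= 2 * k + 2)%N /\
                   (gexp k r + gexp k s != 2 * k - 1)%N.
  by apply/gexp_addP => //; exists r, s.
by rewrite Gmat_diag_gram mxE moments0.
Qed.

Theorem theorem3p13 (F : finFieldType) (n k : nat)
  (hk5 : (5 <= k)%N) (hkn : (k <= n - 2)%N) (hnq : (n - 2 <= #|F| - 2)%N)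
  (alpha : 'I_n -> F) (halpha : injective alpha)
  (v : 'I_n -> F) (hv : forall i, v i != 0) :
  self_orthogonal (Gmat k alpha *m diag_mx (\row_j v j))
  <->
  exists f : {poly F},
    (size f)%:Z <= n%:Z - 2 * k%:Z + 1 /\
    (forall i : 'I_n, v i ^+ 2 = ucoef alpha i * f.[alpha i]) /\
    coefz f (n%:Z - 2 * k%:Z - 1) + coefz f (n%:Z - 2 * k%:Z) * hsym alpha 1 = 0 /\
    coefz f (n%:Z - 2 * k%:Z - 2) + coefz f (n%:Z - 2 * k%:Z - 1) * hsym alpha 1
      + coefz f (n%:Z - 2 * k%:Z) * hsym alpha 2 = 0 /\
    coefz f (n%:Z - 2 * k%:Z - 3) + coefz f (n%:Z - 2 * k%:Z - 2) * hsym alpha 1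
      + coefz f (n%:Z - 2 * k%:Z - 1) * hsym alpha 2
      + coefz f (n%:Z - 2 * k%:Z) * hsym alpha 3 = 0.
Proof.
(* [hnq] is redundant: [n <= #|F|] already follows from [halpha]. *)
have n_gt0 : (0 < n)%N by lia.
have k_gt0 : (0 < k)%N by lia.
have umoment_sq f : (forall i, v i ^+ 2 = ucoef alpha i * f.[alpha i]) ->
    forall e, \sum_i v i ^+ 2 * alpha i ^+ e = umoment alpha f e.
  by move=> v_sq e; apply: eq_bigr => i _; rewrite v_sq.
rewrite self_orthogonal_GmatE //; split=> [moments0 | [f [size_f [v_sq top]]]].
- have [f size_fn v_sq] := interpolation_exists halpha (fun i => v i ^+ 2).
  have f_neq0 : f != 0.
    by apply: contraNneq (hv (Ordinal n_gt0)) => f0; rewrite -sqrf_eq0 v_sq f0 horner0 mulr0.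
  have size_f : (size f <= n - (2 * k - 1))%N.
    apply: (size_le_vanishing_moments halpha size_fn) => e lt_e.
    by rewrite -(umoment_sq f v_sq) moments0 //; lia.
  have size_fz : (size f)%:Z <= n%:Z - 2 * k%:Z + 1.
    by move: size_f; rewrite -size_poly_gt0 in f_neq0; lia.
  exists f; do 2!split=> //.
  apply/(umoments_vanishP halpha n_gt0 k_gt0 size_fz) => e le_e ne_e.
  by rewrite -(umoment_sq f v_sq) moments0.
- move=> e le_e ne_e; rewrite (umoment_sq f v_sq).
  exact: (umoments_vanishP halpha n_gt0 k_gt0 size_f).2 top e le_e ne_e.
Qed.
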